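(* Fix constants $B>0$, $1\le\Gamma\le 3$, $0<\kappa\le 1$, and Riemann data $\varrho_l>0$, $\varrho_r>0$, $\upsilon_l,\upsilon_r\ge0$ with $\upsilon_r\le\upsilon_l-\frac{B}{\varrho_l^{\kappa}}$. For $a>0$, $A>0$ (with $a<1/\max(\varrho_l,\varrho_r)$) let $p(\varrho)=A\left(\frac{\varrho}{1-a\varrho}\right)^{\Gamma}-\frac{B}{\varrho^{\kappa}}$ and let $(\varrho_a,\upsilon_a)$ be the shock-plus-contact-discontinuity Riemann solution of $$\varrho_t+(\varrho\upsilon)_x=0,\qquad (\varrho(\upsilon+p))_t+(\varrho\upsilon(\upsilon+p))_x=0,$$ with $(\varrho,\upsilon)(x,0)=(\varrho_l,\upsilon_l)$ for $x<0$ and $(\varrho_r,\upsilon_r)$ for $x>0$, namely, with $\zeta=x/t$, $$(\varrho_a,\upsilon_a)(\zeta)=\begin{cases}(\varrho_l,\upsilon_l),&\zeta<\sigma_1,\\ (\varrho_*,\upsilon_r),&\sigma_1<\zeta<\sigma_2,\\ (\varrho_r,\upsilon_r),&\zeta>\sigma_2,\end{cases}$$ where $\varrho_*\in(\varrho_l,1/a)$ solves $\upsilon_r=-p(\varrho_* )+\upsilon_l+p(\varrho_l)$, $\sigma_1=\upsilon_l-\frac{\varrho_*(p(\varrho_* )-p(\varrho_l))}{\varrho_*-\varrho_l}$ and $\sigma_2=\upsilon_r$. Then $$\lim_{a,A\to0}\upsilon_a(x,t)=\begin{cases}\upsilon_l,&x<\upsilon_r t,\\ \upsilon_r,&x=\upsilon_r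 t,\\ \upsilon_r,&x>\upsilon_r t,\end{cases}$$ and $\varrho_a$ converges in the sense of distributions to the sum of a step function and a Dirac delta measure supported on the line $x=\upsilon_r t$ with weight $w(t)=\varrho_l(\upsilon_l-\upsilon_r)t$: for every $\psi\in C_0^\infty(\mathbb{R}\times\mathbb{R}^+)$, $$\lim_{a,A\to0}\int_0^{\infty}\!\!\int_{-\infty}^{\infty}\varrho_a(x/t)\psi(x,t)\,dx\,dt=\int_0^\infty \varrho_l(\upsilon_l-\upsilon_r)t\,\psi(\upsilon_r t,t)\,dt+\int_0^\infty\!\!\int_{-\infty}^{\infty}H(x-\upsilon_r t)\psi(x,t)\,dx\,dt,$$ where $H(y)=\varrho_l$ for $y<0$ and $H(y)=\varrho_r$ for $y>0$.
   Context: The limit $a,A\to0$ is taken with $B,\Gamma,\kappa$ and the Riemann data fixed. In this situation the shock connects $(\varrho_l,\upsilon_l)$ to the intermediate state $(\varrho_*,\upsilon_r)$ (with $\varrho_*>\varrho_l$) and the contact discontinuity connects $(\varrho_*,\upsilon_r)$ to $(\varrho_r,\upsilon_r)$. *)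

From Stdlib Require Import Reals.
From Coquelicot Require Import Coquelicot.
Open Scope R_scope.

Definition pres (a A B Gam kap rho : R) : R :=
  A * Rpower (rho / (1 - a * rho)) Gam - B / Rpower rho kap.

Definition admissible (rl rr a A : R) : Prop :=
  0 < a /\ 0 < A /\ a < / Rmax rl rr.

Definition lim_aA (rl rr : R) (F : R -> R -> R) (L : R) : Prop :=
  forall eps : R, 0 < eps -> exists delta : R, 0 < delta /\
    forall a A : R, admissible rl rr a A -> a < delta -> A < delta ->
      Rabs (F a A - L) < eps.

Definition sigma1 (a A B Gam kap rl ul rs : R) : R :=
  ul - rs * (pres a A B Gam kap rs - pres a A B Gam kap rl) / (rs - rl).

(* Riemann solution as a function of zeta = x/t; sigma_2 = ur.
   Conventions on the (measure-zero) discontinuity lines: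
   zeta = sigma1 and zeta = sigma2 are assigned to the middle state. *)
Definition rho_sol (a A B Gam kap rl rr ul ur rs zeta : R) : R :=
  if Rlt_dec zeta (sigma1 a A B Gam kap rl ul rs) then rl
  else if Rle_dec zeta ur then rs else rr.

Definition u_sol (a A B Gam kap rl rr ul ur rs zeta : R) : R :=
  if Rlt_dec zeta (sigma1 a A B Gam kap rl ul rs) then ul
  else if Rle_dec zeta ur then ur else ur.

Definition Hstep (rl rr y : R) : R := if Rlt_dec y 0 then rl else rr.

Fixpoint Ck (k : nat) (f : R -> R -> R) : Prop :=
  match k with
  | O => forall x t, continuity_2d_pt f x t
  | S k' =>
      (forall x t, continuity_2d_pt f x t) /\
      (forall x t, ex_derive (fun y => f y t) x /\ ex_derive (fun s => f x s) t) /\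
      Ck k' (fun x t => Derive (fun y => f y t) x) /\
      Ck k' (fun x t => Derive (fun s => f x s) t)
  end.

Definition test_fun (psi : R -> R -> R) : Prop :=
  (forall k, Ck k psi) /\
  exists X T1 T2 : R, 0 < T1 /\ T1 <= T2 /\
    forall x t, (X < Rabs x \/ t < T1 \/ T2 < t) -> psi x t = 0.

Definition dint (f : R -> R -> R) : R :=
  RInt_gen (fun t => RInt_gen (fun x => f x t)
                       (Rbar_locally m_infty) (Rbar_locally p_infty))
           (at_point 0) (Rbar_locally p_infty).

(* As a, A -> 0 the intermediate density rho_* blows up: if it stayed below M, the
   Rankine-Hugoniot relation together with ul - ur >= B / rl^kap would force
   A >= B / (M^kap (2M)^Gam).  The same relation gives (rho_* - rl) (ur - sigma1) = rl (ul - ur),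
   so sigma1 increases to ur: this yields the pointwise limit of the velocity, and the thin strip
   sigma1 t < x < ur t, where the density is rho_*, carries the mass rl (ul - ur) t.  Paired with
   psi, the three-state density differs from H plus that mass on the line x = ur t by
   (rho_* - rl) times the integral over the strip of psi (x, t) - psi (ur t, t); since the strip
   has width (ur - sigma1) t, this is at most rl (ul - ur) t times the oscillation of psi across
   the strip, hence small by uniform continuity. *)

From Stdlib Require Import Reals Lra FunctionalExtensionality.
From Coquelicot Require Import Coquelicot.
Open Scope R_scope.

Lemma continuous_Rmult_l (c t : R) : continuous (fun s => c * s) t.
Proof. apply (continuous_scal_r (V := R_NormedModule) c (fun s => s)), continuous_id. Qed.

Lemma RInt_dist_le (f g : R -> R) a b e :
  ex_RInt f a b -> ex_RInt g a b ->
  (forall x, Rmin a b <= x <= Rmax a b -> Rabs (f x - g x) <= e) ->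
  Rabs (RInt f a b - RInt g a b) <= Rabs (b - a) * e.
Proof.
  intros Hf Hg Hfg.
  apply (norm_RInt_le_const_abs (fun x => f x - g x)); [exact Hfg |].
  exact (is_RInt_minus _ _ _ _ _ _ (RInt_correct _ _ _ Hf) (RInt_correct _ _ _ Hg)).
Qed.

Lemma RInt_const_dist_le (f : R -> R) a b y e :
  ex_RInt f a b ->
  (forall x, Rmin a b <= x <= Rmax a b -> Rabs (f x - y) <= e) ->
  Rabs (RInt f a b - (b - a) * y) <= Rabs (b - a) * e.
Proof.
  intros Hf Hfy.
  replace ((b - a) * y) with (RInt (fun _ => y) a b) by (rewrite RInt_const; reflexivity).
  apply RInt_dist_le; [exact Hf | apply ex_RInt_const | exact Hfy].
Qed.

Lemma is_RInt_zero (f : R -> R) a b :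
  (forall x, Rmin a b < x < Rmax a b -> f x = 0) -> is_RInt f a b 0.
Proof.
  intros Hf. apply (is_RInt_ext (fun _ => 0)); [intros x Hx; symmetry; auto |].
  pose proof (is_RInt_const (V := R_NormedModule) a b 0) as H0.
  change (scal (b - a) 0) with (scal (V := R_NormedModule) (b - a) zero) in H0.
  rewrite scal_zero_r in H0. exact H0.
Qed.

Lemma is_RInt_gen_compact (Fa Fb : (R -> Prop) -> Prop) {FFa : Filter Fa} {FFb : Filter Fb}
  (f : R -> R) c d l :
  c <= d -> Fa (fun a => a <= c) -> Fb (fun b => d <= b) ->
  (forall x, x < c \/ d < x -> f x = 0) -> is_RInt f c d l ->
  is_RInt_gen f Fa Fb l.
Proof.
  intros Hcd Ha Hb Hf Hl P HP.
  apply (Filter_prod _ _ _ _ _ Ha Hb); intros a b Hac Hdb.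
  exists l; split; [simpl | exact (locally_singleton _ _ HP)].
  replace l with (plus (plus 0 l) 0) by (unfold plus; simpl; ring).
  apply (is_RInt_Chasles f a d b); [apply (is_RInt_Chasles f a c d) |]; auto.
  - apply is_RInt_zero. intros x Hx. apply Hf. rewrite Rmax_right in Hx; lra.
  - apply is_RInt_zero. intros x Hx. apply Hf. rewrite Rmin_left in Hx; lra.
Qed.

Lemma RInt_gen_R_compact (f : R -> R) c d l :
  c <= d -> (forall x, x < c \/ d < x -> f x = 0) -> is_RInt f c d l ->
  RInt_gen f (Rbar_locally m_infty) (Rbar_locally p_infty) = l.
Proof.
  intros Hcd Hf Hl. apply (is_RInt_gen_unique (V := R_CompleteNormedModule)).
  apply (is_RInt_gen_compact _ _ f c d); auto.
  - exists c; intros; lra.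
  - exists d; intros; lra.
Qed.

Lemma RInt_gen_pos_compact (f : R -> R) c d l :
  0 <= c <= d -> (forall x, x < c \/ d < x -> f x = 0) -> is_RInt f c d l ->
  RInt_gen f (at_point 0) (Rbar_locally p_infty) = l.
Proof.
  intros Hcd Hf Hl. apply (is_RInt_gen_unique (V := R_CompleteNormedModule)).
  apply (is_RInt_gen_compact _ _ f c d); try easy.
  exists d; intros; lra.
Qed.

Definition three_state_pairing (psi : R -> R -> R) (K c1 c2 c3 s1 s2 t : R) : R :=
  c1 * RInt (fun x => psi x t) (- K) (s1 * t)
  + c2 * RInt (fun x => psi x t) (s1 * t) (s2 * t)
  + c3 * RInt (fun x => psi x t) (s2 * t) K.

Definition vanishes_outside (psi : R -> R -> R) (X T1 T2 : R) : Prop :=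
  forall x t, X < Rabs x \/ t < T1 \/ T2 < t -> psi x t = 0.

Section ContinuousTestFunction.

Variable psi : R -> R -> R.
Hypothesis psi_cont : forall x t, continuity_2d_pt psi x t.

Lemma continuous_along (f g : R -> R) t :
  continuous f t -> continuous g t -> continuous (fun s => psi (f s) (g s)) t.
Proof.
  intros Hf Hg. apply (continuous_comp_2 f g psi); auto.
  apply continuity_2d_pt_filterlim, psi_cont.
Qed.

Lemma ex_RInt_slice t a b : ex_RInt (fun x => psi x t) a b.
Proof.
  apply (ex_RInt_continuous (V := R_CompleteNormedModule)); intros x _.
  apply continuous_along; [apply continuous_id | apply continuous_const].
Qed.

Lemma continuous_RInt_slice_diff (u v : R -> R) t0 :
  continuous u t0 -> continuous v t0 ->
  continuous (fun t => RInt (fun x => psi x t) (u t) (v t)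
                       - RInt (fun x => psi x t0) (u t) (v t)) t0.
Proof.
  intros Hu Hv. apply filterlim_locally. intros eps.
  set (L0 := Rmin (u t0) (v t0) - 1). set (L1 := Rmax (u t0) (v t0) + 1).
  assert (HL : 2 <= L1 - L0).
  { unfold L0, L1. pose proof (Rmin_l (u t0) (v t0)). pose proof (Rmax_l (u t0) (v t0)). lra. }
  assert (He : 0 < eps / (2 * (L1 - L0))) by (apply Rdiv_lt_0_compat; [apply cond_pos | lra]).
  destruct (uniform_continuity_2d psi L0 L1 (t0 - 1) (t0 + 1) (fun x t _ _ => psi_cont x t)
              (mkposreal _ He)) as [d Hd].
  assert (Hd1 : 0 < Rmin d 1) by (apply Rmin_pos; [apply cond_pos | lra]).
  assert (Hu1 : locally t0 (fun t => Rabs (u t - u t0) < 1))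
    by exact (Hu _ (locally_ball (u t0) (mkposreal 1 Rlt_0_1))).
  assert (Hv1 : locally t0 (fun t => Rabs (v t - v t0) < 1))
    by exact (Hv _ (locally_ball (v t0) (mkposreal 1 Rlt_0_1))).
  assert (Ht1 : locally t0 (fun t => Rabs (t - t0) < Rmin d 1))
    by exact (locally_ball t0 (mkposreal _ Hd1)).
  generalize (filter_and _ _ (filter_and _ _ Hu1 Hv1) Ht1).
  apply filter_imp. intros t [[Hut Hvt] Ht].
  change (Rabs (RInt (fun x => psi x t) (u t) (v t) - RInt (fun x => psi x t0) (u t) (v t)
                - (RInt (fun x => psi x t0) (u t0) (v t0) - RInt (fun x => psi x t0) (u t0) (v t0)))
          < eps).
  rewrite Rminus_diag, Rminus_0_r.
  pose proof (Rmin_l d 1). pose proof (Rmin_r d 1).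
  assert (Htd : Rabs (t - t0) < d) by lra.
  apply Rabs_def2 in Hut, Hvt, Ht.
  pose proof (Rmin_l (u t0) (v t0)). pose proof (Rmin_r (u t0) (v t0)).
  pose proof (Rmax_l (u t0) (v t0)). pose proof (Rmax_r (u t0) (v t0)).
  pose proof (Rmin_l (u t) (v t)). pose proof (Rmin_r (u t) (v t)).
  pose proof (Rmax_l (u t) (v t)). pose proof (Rmax_r (u t) (v t)).
  assert (Hbox : L0 <= Rmin (u t) (v t) /\ Rmax (u t) (v t) <= L1)
    by (split; [apply Rmin_glb | apply Rmax_lub]; unfold L0, L1; lra).
  eapply Rle_lt_trans; [apply RInt_dist_le; try apply ex_RInt_slice |].
  - intros x Hx. left. apply (Hd x t0 x t); try lra.
    rewrite Rminus_diag, Rabs_R0. apply cond_pos.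
  - assert (Rabs (v t - u t) <= L1 - L0) by (apply Rabs_le; lra).
    apply Rle_lt_trans with ((L1 - L0) * (eps / (2 * (L1 - L0)))).
    + apply Rmult_le_compat_r; lra.
    + pose proof (cond_pos eps). replace ((L1 - L0) * (eps / (2 * (L1 - L0)))) with (eps / 2)
        by (field; lra). lra.
Qed.

Lemma continuous_RInt_moving (u v : R -> R) t0 :
  continuous u t0 -> continuous v t0 ->
  continuous (fun t => RInt (fun x => psi x t) (u t) (v t)) t0.
Proof.
  intros Hu Hv.
  set (F0 := fun w => RInt (fun x => psi x t0) 0 w).
  assert (HF0 : forall w, continuous F0 w).
  { intros w. apply (continuous_RInt_1 (fun x => psi x t0) 0 w F0).
    apply filter_forall. intros y. exact (RInt_correct _ _ _ (ex_RInt_slice _ _ _)). }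
  apply (continuous_ext (fun t => (RInt (fun x => psi x t) (u t) (v t)
                                  - RInt (fun x => psi x t0) (u t) (v t))
                                 + (F0 (v t) - F0 (u t)))).
  { intros t. unfold F0.
    rewrite <- (RInt_Chasles (fun x => psi x t0) 0 (u t) (v t)) by apply ex_RInt_slice.
    change plus with Rplus. lra. }
  apply (continuous_plus (V := R_NormedModule)); [apply continuous_RInt_slice_diff; assumption |].
  apply (continuous_minus (fun t => F0 (v t)) (fun t => F0 (u t))); apply continuous_comp; auto.
Qed.

Lemma continuous_along_line c v t : continuous (fun t => c * t * psi (v * t) t) t.
Proof.
  apply (continuous_mult (fun t => c * t) (fun t => psi (v * t) t)).
  - apply continuous_Rmult_l.
  - apply continuous_along; [apply continuous_Rmult_l | apply continuous_id].
Qed.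

Lemma continuous_three_state_pairing K c1 c2 c3 s1 s2 t :
  continuous (three_state_pairing psi K c1 c2 c3 s1 s2) t.
Proof.
  unfold three_state_pairing.
  apply (continuous_plus (V := R_NormedModule));
    [apply (continuous_plus (V := R_NormedModule)) |];
    apply (continuous_scal_r (V := R_NormedModule)), continuous_RInt_moving;
    solve [apply continuous_const | apply continuous_Rmult_l].
Qed.

Lemma RInt_gen_three_state (f : R -> R) K c1 c2 c3 s1 s2 t :
  (forall x, K < Rabs x -> psi x t = 0) -> - K <= s1 * t <= s2 * t -> s2 * t <= K ->
  (forall x, x < s1 * t -> f x = c1 * psi x t) ->
  (forall x, s1 * t < x < s2 * t -> f x = c2 * psi x t) ->
  (forall x, s2 * t < x -> f x = c3 * psi x t) ->
  RInt_gen f (Rbar_locally m_infty) (Rbar_locally p_infty)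
  = three_state_pairing psi K c1 c2 c3 s1 s2 t.
Proof.
  intros HK Hs1 Hs2 Hf1 Hf2 Hf3.
  assert (piece : forall a b c, a <= b -> (forall x, a < x < b -> f x = c * psi x t) ->
            is_RInt f a b (c * RInt (fun x => psi x t) a b)).
  { intros a b c Hab Hf.
    apply (is_RInt_ext (fun x => scal c (psi x t))).
    - intros x Hx. rewrite Rmin_left, Rmax_right in Hx by lra. symmetry. apply Hf, Hx.
    - apply (is_RInt_scal (V := R_NormedModule)), (RInt_correct (V := R_CompleteNormedModule)).
      apply ex_RInt_slice. }
  apply (RInt_gen_R_compact f (- K) K); [lra | |].
  - intros x [Hx | Hx]; [rewrite Hf1 by lra | rewrite Hf3 by lra];
      rewrite HK; [ring | rewrite Rabs_left | ring | rewrite Rabs_right]; lra.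
  - apply (is_RInt_Chasles f (- K) (s2 * t) K); [apply (is_RInt_Chasles f (- K) (s1 * t)) |];
      apply piece; try lra; intros; auto with real.
    + apply Hf1; lra.
    + apply Hf3; lra.
Qed.

Lemma dint_three_state (g : R -> R -> R) X T1 T2 K c1 c2 c3 s1 s2 :
  vanishes_outside psi X T1 T2 -> 0 < T1 <= T2 -> s1 <= s2 ->
  Rabs X <= K -> Rabs s1 * T2 <= K -> Rabs s2 * T2 <= K ->
  (forall x t, 0 < t -> x < s1 * t -> g x t = c1) ->
  (forall x t, 0 < t -> s1 * t < x < s2 * t -> g x t = c2) ->
  (forall x t, 0 < t -> s2 * t < x -> g x t = c3) ->
  dint (fun x t => g x t * psi x t) = RInt (three_state_pairing psi K c1 c2 c3 s1 s2) T1 T2.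
Proof.
  intros Hsupp HT Hs HX Hs1 Hs2 Hg1 Hg2 Hg3.
  assert (Hout : forall t, t < T1 \/ T2 < t -> three_state_pairing psi K c1 c2 c3 s1 s2 t = 0).
  { intros t Ht. unfold three_state_pairing.
    rewrite !(is_RInt_unique _ _ _ 0) by (apply is_RInt_zero; intros; apply Hsupp; tauto).
    ring. }
  unfold dint.
  replace (fun t => RInt_gen (fun x => g x t * psi x t)
                             (Rbar_locally m_infty) (Rbar_locally p_infty))
    with (three_state_pairing psi K c1 c2 c3 s1 s2).
  - apply (RInt_gen_pos_compact _ T1 T2); [lra | exact Hout |].
    apply (RInt_correct (V := R_CompleteNormedModule)), ex_RInt_continuous.
    intros; apply continuous_three_state_pairing.
  - apply functional_extensionality. intros t.
    destruct (Rlt_or_le t T1) as [Ht | HT1]; [| destruct (Rlt_or_le T2 t) as [Ht | HT2]].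
    1,2: rewrite Hout by tauto; symmetry;
      apply (RInt_gen_R_compact _ 0 0); [lra | | apply is_RInt_zero];
      intros; rewrite Hsupp by tauto; ring.
    symmetry. apply RInt_gen_three_state.
    + intros x Hx. apply Hsupp. left. pose proof (Rle_abs X). lra.
    + assert (Rabs s1 * t <= Rabs s1 * T2) by (apply Rmult_le_compat_l; [apply Rabs_pos | lra]).
      pose proof (Rabs_maj2 s1).
      split; nra.
    + assert (Rabs s2 * t <= Rabs s2 * T2) by (apply Rmult_le_compat_l; [apply Rabs_pos | lra]).
      pose proof (Rle_abs s2). nra.
    + intros x Hx. rewrite Hg1; [reflexivity | lra | exact Hx].
    + intros x Hx. rewrite Hg2; [reflexivity | lra | exact Hx].
    + intros x Hx. rewrite Hg3; [reflexivity | lra | exact Hx].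
Qed.

Lemma three_state_pairing_defect_le K c1 c2 c3 s v t e :
  0 <= t -> c1 <= c2 -> s <= v ->
  (forall x, s * t <= x <= v * t -> Rabs (psi x t - psi (v * t) t) <= e) ->
  Rabs (three_state_pairing psi K c1 c2 c3 s v t - three_state_pairing psi K c1 c1 c3 v v t
        - (c2 - c1) * (v - s) * t * psi (v * t) t)
  <= (c2 - c1) * ((v - s) * t * e).
Proof.
  intros Ht Hc Hsv Hpsi.
  assert (Hst : s * t <= v * t) by nra.
  assert (Hid : three_state_pairing psi K c1 c2 c3 s v t - three_state_pairing psi K c1 c1 c3 v v t
                - (c2 - c1) * (v - s) * t * psi (v * t) t
                = (c2 - c1) * (RInt (fun x => psi x t) (s * t) (v * t)
                               - (v * t - s * t) * psi (v * t) t)).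
  { unfold three_state_pairing.
    rewrite <- (RInt_Chasles (fun x => psi x t) (- K) (s * t) (v * t)) by apply ex_RInt_slice.
    rewrite RInt_point. change plus with Rplus. change zero with 0. lra. }
  rewrite Hid, Rabs_mult, (Rabs_pos_eq (c2 - c1)) by lra.
  apply Rmult_le_compat_l; [lra |].
  replace ((v - s) * t * e) with (Rabs (v * t - s * t) * e) by (rewrite Rabs_pos_eq; lra).
  apply RInt_const_dist_le; [apply ex_RInt_slice |].
  intros x Hx. rewrite Rmin_left, Rmax_right in Hx by lra. apply Hpsi, Hx.
Qed.

Lemma dint_Hstep X T1 T2 K rl rr v :
  vanishes_outside psi X T1 T2 -> 0 < T1 <= T2 -> Rabs X <= K -> Rabs v * T2 <= K ->
  dint (fun x t => Hstep rl rr (x - v * t) * psi x t)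
  = RInt (three_state_pairing psi K rl rl rr v v) T1 T2.
Proof.
  intros Hsupp HT HX Hv.
  apply (dint_three_state (fun x t => Hstep rl rr (x - v * t)) X); try easy || lra;
    intros x t _ Hx; unfold Hstep; destruct (Rlt_dec _ 0); lra.
Qed.

Lemma dint_rho_sol X T1 T2 K a A B Gam kap rl rr ul ur rs :
  vanishes_outside psi X T1 T2 -> 0 < T1 <= T2 -> sigma1 a A B Gam kap rl ul rs <= ur ->
  Rabs X <= K -> Rabs (sigma1 a A B Gam kap rl ul rs) * T2 <= K -> Rabs ur * T2 <= K ->
  dint (fun x t => rho_sol a A B Gam kap rl rr ul ur rs (x / t) * psi x t)
  = RInt (three_state_pairing psi K rl rs rr (sigma1 a A B Gam kap rl ul rs) ur) T1 T2.
Proof.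
  intros Hsupp HT Hs HX Hs1 Hur.
  apply (dint_three_state (fun x t => rho_sol a A B Gam kap rl rr ul ur rs (x / t)) X);
    try easy; intros x t Ht Hx; unfold rho_sol.
  - apply Rlt_div_l in Hx; [| lra]. destruct (Rlt_dec _ _); lra.
  - destruct Hx as [Hx1 Hx2]. apply Rlt_div_r in Hx1; [| lra]. apply Rlt_div_l in Hx2; [| lra].
    destruct (Rlt_dec _ _); [lra |]. destruct (Rle_dec _ _); lra.
  - apply Rlt_div_r in Hx; [| lra].
    destruct (Rlt_dec _ _); [lra |]. destruct (Rle_dec _ _); lra.
Qed.

Lemma RInt_three_state_pairing_defect_le K c1 c2 c3 s v T1 T2 e :
  0 <= T1 <= T2 -> c1 <= c2 -> s <= v -> 0 <= e ->
  (forall x t, T1 <= t <= T2 -> s * t <= x <= v * t -> Rabs (psi x t - psi (v * t) t) <= e) ->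
  Rabs (RInt (three_state_pairing psi K c1 c2 c3 s v) T1 T2
        - (RInt (fun t => (c2 - c1) * (v - s) * t * psi (v * t) t) T1 T2
           + RInt (three_state_pairing psi K c1 c1 c3 v v) T1 T2))
  <= (T2 - T1) * ((c2 - c1) * ((v - s) * T2 * e)).
Proof.
  intros HT Hc Hsv He Hpsi.
  set (P := three_state_pairing psi K c1 c2 c3 s v).
  set (P0 := three_state_pairing psi K c1 c1 c3 v v).
  set (line := fun t => (c2 - c1) * (v - s) * t * psi (v * t) t).
  assert (Hex : forall f, (forall t, continuous f t) -> ex_RInt f T1 T2)
    by (intros f Hf; apply (ex_RInt_continuous (V := R_CompleteNormedModule)); auto).
  assert (Hline : forall t, continuous line t) by (intros; apply continuous_along_line).
  assert (HP : forall t, continuous P t) by (intros; apply continuous_three_state_pairing).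
  assert (HP0 : forall t, continuous P0 t) by (intros; apply continuous_three_state_pairing).
  assert (HPP0 : forall t, continuous (fun t => P t - P0 t) t)
    by (intros; apply (continuous_minus (V := R_NormedModule)); auto).
  assert (Hdefect : forall t, continuous (fun t => P t - P0 t - line t) t)
    by (intros; apply (continuous_minus (V := R_NormedModule)); auto).
  replace (RInt P T1 T2 - (RInt line T1 T2 + RInt P0 T1 T2))
    with (RInt (fun t => P t - P0 t - line t) T1 T2).
  2:{ rewrite (RInt_minus (V := R_CompleteNormedModule)), (RInt_minus (V := R_CompleteNormedModule))
        by (apply Hex; auto).
      change minus with Rminus. lra. }
  apply (norm_RInt_le_const (V := R_NormedModule) (fun t => P t - P0 t - line t)); [lra | |].
  - intros t Ht. eapply Rle_trans; [apply three_state_pairing_defect_le; try lra |].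
    + intros x Hx. apply Hpsi; [exact Ht | exact Hx].
    + apply Rmult_le_compat_l; [lra |].
      apply Rmult_le_compat_r; [| apply Rmult_le_compat_l]; lra.
  - exact (RInt_correct _ _ _ (Hex _ Hdefect)).
Qed.

Lemma RInt_gen_along_line X T1 T2 c v :
  vanishes_outside psi X T1 T2 -> 0 < T1 <= T2 ->
  RInt_gen (fun t => c * t * psi (v * t) t) (at_point 0) (Rbar_locally p_infty)
  = RInt (fun t => c * t * psi (v * t) t) T1 T2.
Proof.
  intros Hsupp HT. apply (RInt_gen_pos_compact _ T1 T2); [lra | |].
  - intros t Ht. rewrite Hsupp by tauto. ring.
  - apply (RInt_correct (V := R_CompleteNormedModule)), ex_RInt_continuous.
    intros; apply continuous_along_line.
Qed.

Lemma uniform_continuity_wedge K T1 T2 e : 0 <= T1 <= T2 -> 0 < e ->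
  exists d, 0 < d /\ forall s v, Rabs s * T2 <= K -> Rabs v * T2 <= K ->
    s <= v -> (v - s) * T2 < d ->
    forall x t, T1 <= t <= T2 -> s * t <= x <= v * t -> Rabs (psi x t - psi (v * t) t) <= e.
Proof.
  intros HT He.
  destruct (uniform_continuity_2d psi (- K) K T1 T2 (fun x t _ _ => psi_cont x t) (mkposreal e He))
    as [d Hd].
  exists d. split; [apply cond_pos |]. intros s v Hs Hv Hsv Hd' x t Ht Hx.
  assert (Hbox : forall r, Rabs r * T2 <= K -> - K <= r * t <= K).
  { intros r Hr. apply Rabs_le_between. rewrite Rabs_mult, (Rabs_pos_eq t) by lra.
    pose proof (Rabs_pos r). nra. }
  pose proof (Hbox s Hs). pose proof (Hbox v Hv).
  left. apply (Hd (v * t) t x t); try lra.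
  - assert ((v - s) * t <= (v - s) * T2) by (apply Rmult_le_compat_l; lra).
    rewrite Rabs_left1; lra.
  - rewrite Rminus_diag, Rabs_R0. apply cond_pos.
Qed.

End ContinuousTestFunction.

Lemma Rpower_gt0 x y : 0 < Rpower x y.
Proof. apply exp_pos. Qed.

Lemma shock_speed_deficit a A B Gam kap rl ul ur rs :
  rl < rs -> ur = - pres a A B Gam kap rs + ul + pres a A B Gam kap rl ->
  (rs - rl) * (ur - sigma1 a A B Gam kap rl ul rs) = rl * (ul - ur).
Proof.
  intros Hrs Hur. unfold sigma1.
  replace (pres a A B Gam kap rs - pres a A B Gam kap rl) with (ul - ur) by lra.
  field. lra.
Qed.

Lemma A_lower_bound_of_bounded_rstar a A B Gam kap rl ul ur rs M :
  0 <= B -> 0 <= Gam -> 0 <= kap -> 0 < rl -> 0 < a -> 0 < A ->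
  ur <= ul - B / Rpower rl kap -> rl < rs <= M -> 2 * a * M <= 1 ->
  ur = - pres a A B Gam kap rs + ul + pres a A B Gam kap rl ->
  B / (Rpower M kap * Rpower (2 * M) Gam) < A.
Proof.
  intros HB HGam Hkap Hrl Ha HA Hur Hrs HaM Hrh. unfold pres in Hrh.
  assert (Hq : 0 < rs / (1 - a * rs) <= 2 * M).
  { assert (1 / 2 <= 1 - a * rs) by nra.
    split; [apply Rdiv_lt_0_compat | apply Rle_div_l]; nra. }
  assert (HQ : Rpower (rs / (1 - a * rs)) Gam <= Rpower (2 * M) Gam) by (apply Rle_Rpower_l; lra).
  assert (HP : Rpower rs kap <= Rpower M kap) by (apply Rle_Rpower_l; lra).
  assert (0 < A * Rpower (rl / (1 - a * rl)) Gam) by (apply Rmult_lt_0_compat, Rpower_gt0; lra).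
  assert (Hkey : B / Rpower rs kap < A * Rpower (rs / (1 - a * rs)) Gam) by lra.
  rewrite Rlt_div_l in Hkey by apply Rpower_gt0.
  apply Rlt_div_l; [apply Rmult_lt_0_compat; apply Rpower_gt0 |].
  apply Rlt_le_trans with (1 := Hkey).
  rewrite (Rmult_comm (Rpower M kap)), <- Rmult_assoc.
  pose proof (Rpower_gt0 (rs / (1 - a * rs)) Gam). pose proof (Rpower_gt0 rs kap).
  apply Rmult_le_compat; [nra | lra | apply Rmult_le_compat_l |]; lra.
Qed.

Lemma lim_aA_eventually_const rl rr (F : R -> R -> R) L :
  (exists delta, 0 < delta /\
     forall a A, admissible rl rr a A -> a < delta -> A < delta -> F a A = L) ->
  lim_aA rl rr F L.
Proof.
  intros [delta [Hdelta HF]] eps Heps. exists delta. split; [exact Hdelta |].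
  intros a A Had Ha HA. rewrite HF, Rminus_diag, Rabs_R0 by assumption. exact Heps.
Qed.

Section ShockPlusContact.

Variables (B Gam kap rl rr ul ur : R) (rstar : R -> R -> R).
Hypotheses (B_gt0 : 0 < B) (Gam_ge0 : 0 <= Gam) (kap_ge0 : 0 <= kap) (rl_gt0 : 0 < rl).
Hypothesis ur_le : ur <= ul - B / Rpower rl kap.
Hypothesis rstar_spec : forall a A, admissible rl rr a A ->
  rl < rstar a A < / a /\
  ur = - pres a A B Gam kap (rstar a A) + ul + pres a A B Gam kap rl.

Lemma delta_weight_gt0 : 0 < rl * (ul - ur).
Proof.
  apply Rmult_lt_0_compat; [exact rl_gt0 |].
  assert (0 < B / Rpower rl kap) by (apply Rdiv_lt_0_compat; [exact B_gt0 | apply Rpower_gt0]).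
  lra.
Qed.

Lemma rstar_unbounded M : 0 < M ->
  exists delta, 0 < delta /\
    forall a A, admissible rl rr a A -> a < delta -> A < delta -> M < rstar a A.
Proof.
  intros HM.
  set (A0 := B / (Rpower M kap * Rpower (2 * M) Gam)).
  assert (HA0 : 0 < A0)
    by (apply Rdiv_lt_0_compat; [exact B_gt0 | apply Rmult_lt_0_compat; apply Rpower_gt0]).
  exists (Rmin (/ (2 * M)) A0). split; [apply Rmin_pos; [apply Rinv_0_lt_compat |]; lra |].
  intros a A Had Ha HA.
  pose proof (Rmin_l (/ (2 * M)) A0). pose proof (Rmin_r (/ (2 * M)) A0).
  destruct (rstar_spec a A Had) as [[Hrs _] Hrh]. destruct Had as [Ha0 [HA0' _]].
  destruct (Rlt_or_le M (rstar a A)) as [HMrs | HrsM]; [exact HMrs | exfalso].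
  assert (HaM : 2 * a * M <= 1).
  { assert (a * (2 * M) <= / (2 * M) * (2 * M)) by (apply Rmult_le_compat_r; lra).
    rewrite Rinv_l in H1 by lra. lra. }
  assert (A0 < A)
    by (apply (A_lower_bound_of_bounded_rstar a A B Gam kap rl ul ur (rstar a A) M); lra).
  lra.
Qed.

Lemma sigma1_lt_ur a A : admissible rl rr a A -> sigma1 a A B Gam kap rl ul (rstar a A) < ur.
Proof.
  intros Had. destruct (rstar_spec a A Had) as [[Hrs _] Hrh].
  pose proof (shock_speed_deficit a A B Gam kap rl ul ur (rstar a A) Hrs Hrh).
  pose proof delta_weight_gt0. nra.
Qed.

Lemma sigma1_near_ur eta : 0 < eta ->
  exists delta, 0 < delta /\ forall a A, admissible rl rr a A -> a < delta -> A < delta ->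
    ur - eta < sigma1 a A B Gam kap rl ul (rstar a A).
Proof.
  intros Heta. pose proof delta_weight_gt0 as Hw.
  assert (Hwe : 0 < rl * (ul - ur) / eta) by (apply Rdiv_lt_0_compat; lra).
  destruct (rstar_unbounded (rl + rl * (ul - ur) / eta)) as [delta [Hdelta Hlarge]]; [lra |].
  exists delta. split; [exact Hdelta |]. intros a A Had Ha HA.
  specialize (Hlarge a A Had Ha HA).
  destruct (rstar_spec a A Had) as [[Hrs _] Hrh].
  pose proof (shock_speed_deficit a A B Gam kap rl ul ur (rstar a A) Hrs Hrh).
  assert (rl * (ul - ur) / eta * eta = rl * (ul - ur)) by (field; lra).
  nra.
Qed.

Lemma u_sol_lim_left x t : 0 < t -> x < ur * t ->
  lim_aA rl rr (fun a A => u_sol a A B Gam kap rl rr ul ur (rstar a A) (x / t)) ul.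
Proof.
  intros Ht Hx. apply Rlt_div_l in Hx; [| exact Ht].
  destruct (sigma1_near_ur (ur - x / t)) as [delta [Hdelta Hnear]]; [lra |].
  apply lim_aA_eventually_const. exists delta. split; [exact Hdelta |].
  intros a A Had Ha HA. specialize (Hnear a A Had Ha HA).
  unfold u_sol. destruct (Rlt_dec _ _); [reflexivity | lra].
Qed.

Lemma u_sol_lim_right x t : 0 < t -> ur * t <= x ->
  lim_aA rl rr (fun a A => u_sol a A B Gam kap rl rr ul ur (rstar a A) (x / t)) ur.
Proof.
  intros Ht Hx. apply Rle_div_r in Hx; [| exact Ht].
  apply lim_aA_eventually_const. exists 1. split; [lra |].
  intros a A Had _ _. pose proof (sigma1_lt_ur a A Had).
  unfold u_sol. destruct (Rlt_dec _ _); [lra |]. destruct (Rle_dec _ _); reflexivity.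
Qed.

Lemma rho_sol_weak_lim psi : test_fun psi ->
  lim_aA rl rr
    (fun a A => dint (fun x t =>
        rho_sol a A B Gam kap rl rr ul ur (rstar a A) (x / t) * psi x t))
    (RInt_gen (fun t => rl * (ul - ur) * t * psi (ur * t) t) (at_point 0) (Rbar_locally p_infty)
     + dint (fun x t => Hstep rl rr (x - ur * t) * psi x t)).
Proof.
  intros [Hsmooth [X [T1 [T2 [HT1 [HT12 Hsupp]]]]]].
  assert (Hcont : forall x t, continuity_2d_pt psi x t) by exact (Hsmooth 0%nat).
  pose proof delta_weight_gt0 as Hw.
  set (K := Rabs X + (Rabs ur + 1) * T2).
  assert (HXK : Rabs X <= K) by (unfold K; pose proof (Rabs_pos ur); nra).
  assert (HsK : forall s, ur - 1 <= s <= ur -> Rabs s * T2 <= K).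
  { intros s Hs. assert (Rabs s <= Rabs ur + 1).
    { pose proof (Rle_abs ur). pose proof (Rabs_maj2 ur). apply Rabs_le. lra. }
    unfold K. pose proof (Rabs_pos X). nra. }
  rewrite (RInt_gen_along_line psi Hcont X T1 T2), (dint_Hstep psi Hcont X T1 T2 K);
    try easy; try lra; try (apply HsK; lra).
  intros eps Heps.
  assert (HP : 0 <= (T2 - T1) * (rl * (ul - ur)) * T2)
    by (apply Rmult_le_pos; [apply Rmult_le_pos |]; lra).
  set (e := eps / (2 * ((T2 - T1) * (rl * (ul - ur)) * T2 + 1))).
  assert (He : 0 < e) by (apply Rdiv_lt_0_compat; lra).
  destruct (uniform_continuity_wedge psi Hcont K T1 T2 e) as [d [Hd Hwedge]]; [lra | exact He |].
  assert (Hd0 : 0 < d / T2) by (apply Rdiv_lt_0_compat; lra).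
  destruct (sigma1_near_ur (Rmin 1 (d / T2))) as [delta [Hdelta Hnear]]; [apply Rmin_pos; lra |].
  exists delta. split; [exact Hdelta |]. intros a A Had Ha HA.
  specialize (Hnear a A Had Ha HA). pose proof (sigma1_lt_ur a A Had) as Hlt.
  destruct (rstar_spec a A Had) as [[Hrs _] Hrh].
  pose proof (shock_speed_deficit a A B Gam kap rl ul ur (rstar a A) Hrs Hrh) as Hdef.
  pose proof (Rmin_l 1 (d / T2)). pose proof (Rmin_r 1 (d / T2)).
  rewrite (dint_rho_sol psi Hcont X T1 T2 K); try easy; try lra; try (apply HsK; lra).
  set (rs := rstar a A) in *. set (s1 := sigma1 a A B Gam kap rl ul rs) in *.
  rewrite <- Hdef.
  eapply Rle_lt_trans;
    [apply (RInt_three_state_pairing_defect_le psi Hcont K rl rs rr s1 ur T1 T2 e); try lra |].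
  - apply Hwedge; try (apply HsK; lra); [lra | apply Rlt_div_r; lra].
  - replace ((T2 - T1) * ((rs - rl) * ((ur - s1) * T2 * e)))
      with ((T2 - T1) * (rl * (ul - ur)) * T2 * e) by (rewrite <- Hdef; ring).
    assert (e * (2 * ((T2 - T1) * (rl * (ul - ur)) * T2 + 1)) = eps) by (unfold e; field; lra).
    nra.
Qed.

End ShockPlusContact.

Theorem theorem3p1 (B Gam kap rl rr ul ur : R) (rstar : R -> R -> R) :
  0 < B -> 1 <= Gam <= 3 -> 0 < kap <= 1 ->
  0 < rl -> 0 < rr -> 0 <= ul -> 0 <= ur ->
  ur <= ul - B / Rpower rl kap ->
  (* rstar a A is rho_star: in (rho_l, 1/a), solving ur = -p(rho_star) + ul + p(rho_l) *)
  (forall a A, admissible rl rr a A ->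
     rl < rstar a A < / a /\
     ur = - pres a A B Gam kap (rstar a A) + ul + pres a A B Gam kap rl) ->
  (forall x t, 0 < t ->
     (x < ur * t ->
        lim_aA rl rr (fun a A => u_sol a A B Gam kap rl rr ul ur (rstar a A) (x / t)) ul) /\
     (x = ur * t ->
        lim_aA rl rr (fun a A => u_sol a A B Gam kap rl rr ul ur (rstar a A) (x / t)) ur) /\
     (x > ur * t ->
        lim_aA rl rr (fun a A => u_sol a A B Gam kap rl rr ul ur (rstar a A) (x / t)) ur)) /\
  (forall psi, test_fun psi ->
     lim_aA rl rr
       (fun a A => dint (fun x t =>
           rho_sol a A B Gam kap rl rr ul ur (rstar a A) (x / t) * psi x t))
       (RInt_gen (fun t => rl * (ul - ur) * t * psi (ur * t) t)
                 (at_point 0) (Rbar_locally p_infty)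
        + dint (fun x t => Hstep rl rr (x - ur * t) * psi x t))).
Proof.
  intros HB HGam Hkap Hrl _ _ _ Hur Hrstar.
  split.
  - intros x t Ht. repeat split; intros Hx.
    + eapply (u_sol_lim_left B Gam kap rl rr ul ur rstar); eauto; lra.
    + eapply (u_sol_lim_right B Gam kap rl rr ul ur rstar); eauto; lra.
    + eapply (u_sol_lim_right B Gam kap rl rr ul ur rstar); eauto; lra.
  - eapply (rho_sol_weak_lim B Gam kap rl rr ul ur rstar); eauto; lra.
Qed.
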